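(* Let $n>1$, let $K\subseteq\mathbb{R}^n$ be a pointed closed convex cone with nonempty interior inducing the partial order $x\preceq y\iff y-x\in K$, and let $Y$ be a nonempty open subset of $\mathbb{R}^n$ equipped with the relative Euclidean topology $\tau$ and the restriction of $\preceq$. Then $(Y,\tau,\preceq)$ is a partially ordered topological space and the canonical map $y\mapsto y^\downarrow$ topologically order-embeds $(Y,\tau,\preceq)$ in $(C(Y),\tau_F,\subseteq)$.
   Context: A partially ordered topological space is a topological space with a partial order whose graph is closed in the product. For $y\in Y$, $y^\downarrow=\{u\in Y:u\preceq y\}$ (taken inside $Y$). $C(Y)$ = closed subsets of $Y$, $C^\downarrow(Y)=\{y^\downarrow:y\in Y\}$. The Fell topology $\tau_F$ on $C(Y)$ is generated by the sets $\{A\in C(Y):A\cap O\neq\emptyset\}$ ($O\subseteq Y$ open) and $\{A\in C(Y):A\cap D=\emptyset\}$ ($D\subseteq Y$ compact). ''Topologically order-embeds'' means: $x\preceq y\iff x^\downarrow\subseteq y^\downarrow$, and $y\mapsto y^\downarrow$ is a homeomorphism from $(Y,\tau)$ onto $C^\downarrow(Y)$ with the relative Fell topology. *)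

(* R^n is 'rV[R]_n with its canonical (product =
   Euclidean) topology, R : realType. *)
From HB Require Import structures.
From mathcomp Require Import all_boot all_order all_algebra.
From mathcomp Require Import all_classical all_reals all_analysis.
Set Implicit Arguments. Unset Strict Implicit. Unset Printing Implicit Defensive.
Import Order.TTheory GRing.Theory Num.Theory.
Import numFieldNormedType.Exports.
Local Open Scope classical_set_scope.
Local Open Scope ring_scope.

Section Defs.
Variables (R : realType) (n : nat).
Local Notation V := 'rV[R]_n.

Definition convex_cone (K : set V) : Prop :=
  (forall x y, K x -> K y -> forall t : R, 0 <= t -> t <= 1 ->
     K ((1 - t) *: x + t *: y)) /\
  (forall x, K x -> forall t : R, 0 < t -> K (t *: x)).

Definition pointed (K : set V) : Prop := forall x, K x -> K (- x) -> x = 0.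

Definition cone_le (K : set V) (x y : V) : Prop := K (y - x).

Definition down (K Y : set V) (y : V) : set V := [set u | Y u /\ cone_le K u y].

Definition rel_open (Y A : set V) : Prop := exists O : set V, open O /\ A = O `&` Y.
Definition rel_closed (Y A : set V) : Prop := exists F : set V, closed F /\ A = F `&` Y.

Definition CY (Y : set V) : set (set V) := [set A | rel_closed Y A].
Definition Cdown (K Y : set V) : set (set V) :=
  [set A | exists y, Y y /\ A = down K Y y].

(* subbasic sets of the Fell topology on C(Y); compact subsets of the
   subspace Y are exactly the compact subsets of R^n contained in Y *)
Definition fell_subbasic (Y : set V) (S : set (set V)) : Prop :=
  (exists O : set V, rel_open Y O /\ S = [set A | CY Y A /\ A `&` O !=set0]) \/
  (exists D : set V, compact D /\ D `<=` Y /\ S = [set A | CY Y A /\ A `&` D = set0]).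

Definition fell_open (Y : set V) (U : set (set V)) : Prop :=
  U `<=` CY Y /\
  forall A, U A -> exists (k : nat) (S : 'I_k -> set (set V)),
    (forall i, fell_subbasic Y (S i)) /\
    (forall i, S i A) /\
    [set B | CY Y B /\ forall i, S i B] `<=` U.

Definition rel_fell_open (K Y : set V) (W : set (set V)) : Prop :=
  exists U, fell_open Y U /\ W = U `&` Cdown K Y.

Definition is_POTS (K Y : set V) : Prop :=
  (forall x, Y x -> cone_le K x x) /\
  (forall x y, Y x -> Y y -> cone_le K x y -> cone_le K y x -> x = y) /\
  (forall x y z, Y x -> Y y -> Y z -> cone_le K x y -> cone_le K y z ->
     cone_le K x z) /\
  (exists G : set (V * V), closed G /\
     [set p | Y p.1 /\ Y p.2 /\ cone_le K p.1 p.2] = G `&` (Y `*` Y)).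

Definition topo_order_embeds (K Y : set V) : Prop :=
  (forall y, Y y -> CY Y (down K Y y)) /\
  (forall x y, Y x -> Y y -> (cone_le K x y <-> down K Y x `<=` down K Y y)) /\
  (forall x y, Y x -> Y y -> down K Y x = down K Y y -> x = y) /\
  (forall W, rel_fell_open K Y W -> rel_open Y [set y | Y y /\ W (down K Y y)]) /\
  (forall O, rel_open Y O -> rel_fell_open K Y (down K Y @` O)).

End Defs.

From Pilot Require Import Defs.
From HB Require Import structures.
From mathcomp Require Import all_boot all_order all_algebra.
From mathcomp Require Import all_classical all_reals all_analysis.
From mathcomp Require Import ring.
Import Order.TTheory GRing.Theory Num.Theory.
Import numFieldNormedType.Exports.
Set Implicit Arguments. Unset Strict Implicit. Unset Printing Implicit Defensive.
Local Open Scope classical_set_scope.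
Local Open Scope ring_scope.

(* Continuity of y ↦ y↓ uses that ⪯ is translation invariant and that a compact set missing
   the closed set y - K stays at positive distance from it.  For openness, fix y0, a point e
   interior to K, and put c = y0 - eta e, a = c - eta e for small eta > 0.  Every point of a
   small ball around c lies above a, and since order intervals of a pointed cone have
   diameter O(|y0 - a|), y0↓ misses the compact shell D = {d ⪰ a : |d - y0| = rho}.
   Conversely, if y↓ contains a point u of that ball while y is far from y0, the segment
   [u, y] crosses the sphere at some d with a ⪯ d ⪯ y, so y↓ meets D.  Hence the Fell-basic
   set "meets the ball, misses D" contains y0↓, and only down-sets of points near y0. *)

Lemma compact_closed_disjoint_dist (R : realFieldType) (V : normedModType R)
    (A B : set V) : compact A -> closed B -> A `&` B = set0 ->
  exists2 r : R, 0 < r & forall a b, A a -> B b -> r <= `|a - b|.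
Proof.
move=> /compact_near_coveringP cA cB AB0.
have : \forall r \near 0^'+, A `<=` [set a | forall b, B b -> r <= `|a - b|].
  apply: (cA R _ (fun r a => forall b, B b -> r <= `|a - b|)) => a Aa.
  have : nbhs a (~` B).
    move: (closed_openC cB); rewrite openE; apply => Ba.
    by have : (A `&` B) a by []; rewrite AB0.
  move=> /nbhs_ballP[e /= e0 eB].
  near=> a' r => b Bb; rewrite leNgt; apply/negP => a'b_lt.
  have re : r < e / 2 by near: r; apply: nbhs_right_lt; rewrite divr_gt0.
  apply: (eB b) => //; rewrite -ball_normE /= (splitr e).
  apply: le_lt_trans (ler_distD a' _ _) _; rewrite ltrD //.
    near: a'; apply/nbhs_ballP; exists (e / 2) => /=; first by rewrite divr_gt0.
    by move=> ?; rewrite -ball_normE.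
  exact: lt_trans a'b_lt re.
Unshelve. all: end_near.
move=> /(filterI (nbhs_right_gt 0))/filter_ex[r [r0 Ar]].
by exists r => // a b /Ar; apply.
Qed.

Lemma segment_crosses_sphere (R : realType) (V : normedModType R) (x u y : V) (rho : R) :
  `|x - u| < rho -> rho <= `|x - y| ->
  exists2 t, 0 <= t <= 1 & `|x - (u + t *: (y - u))| = rho.
Proof.
move=> ur ry; pose f t := `|x - (u + t *: (y - u))|.
have f0 : f 0 = `|x - u| by rewrite /f scale0r addr0.
have f1 : f 1 = `|x - y| by rewrite /f scale1r addrCA subrr addr0.
have cf : {within `[0, 1], continuous f}.
  apply: continuous_subspaceT => t; apply: cvg_norm; apply: cvgB; first exact: cvg_cst.
  by apply: cvgD; [exact: cvg_cst | apply: cvgZ; [exact: cvg_id | exact: cvg_cst]].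
have [|t] := @IVT _ f 0 1 rho ler01 cf; first by rewrite f0 f1 ge_min le_max (ltW ur) ry orbT.
by rewrite in_itv /=; exists t.
Qed.

Lemma exists_pos_mulr_lt (R : realFieldType) (M rho : R) : 0 <= M -> 0 < rho ->
  exists2 eta : R, 0 < eta & eta * M < rho.
Proof.
move=> M0 rho0; have M1 : 0 < M + 1 by rewrite ltr_wpDl.
exists (rho / (M + 1)); first by rewrite divr_gt0.
by rewrite mulrAC ltr_pdivrMr // ltr_pM2l // ltrDl.
Qed.

Section ClosedConvexCone.
Variables (R : realType) (n : nat) (K : set 'rV[R]_n).
Hypotheses (convK : convex_cone K) (closedK : closed K).
Local Notation V := 'rV[R]_n.

Lemma cone_add (x y : V) : K x -> K y -> K (x + y).
Proof.
move=> Kx Ky; have /andP[half_ge0 half_le1] : 0 <= (2:R)^-1 <= 1.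
  by rewrite invr_ge0 ler0n invf_le1 // ler1n.
have /convK.2 /(_ 2) := convK.1 x y Kx Ky _ half_ge0 half_le1.
have -> : 1 - (2:R)^-1 = 2^-1 by rewrite {1}(splitr 1) mul1r addrK.
by rewrite scalerDr !scalerA divff // !scale1r; apply; rewrite ltr0n.
Qed.

Lemma cone0 (x : V) : K x -> K 0.
Proof.
move=> Kx; apply: closedK => B /nbhs_ballP[e /= e0 eB].
pose t := e / (2 * (`|x| + 1)).
have t0 : 0 < t by rewrite divr_gt0 // mulr_gt0 // ltr_wpDl.
exists (t *: x); split; first exact: convK.2.
apply: eB; rewrite -ball_normE /= sub0r normrN normrZ gtr0_norm //.
apply: (@le_lt_trans _ _ (t * (`|x| + 1))); first by rewrite ler_pM2l // lerDl.
have -> : t * (`|x| + 1) = e / 2 by rewrite /t; field; rewrite gt_eqF // ltr_wpDl.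
by rewrite gtr_pMr // invf_lt1 // ltr1n.
Qed.

Lemma coneZ (x : V) (t : R) : K x -> 0 <= t -> K (t *: x).
Proof.
move=> Kx; rewrite le_eqVlt => /predU1P[<-|t0]; last exact: convK.2.
by rewrite scale0r; exact: cone0 Kx.
Qed.

Lemma cone_le_trans (x y z : V) : cone_le K x y -> cone_le K y z -> cone_le K x z.
Proof.
by rewrite /cone_le => Kyx Kzy; rewrite -[z](subrK y) -addrA; apply: cone_add.
Qed.

Lemma cone_leD2r (x y w : V) : cone_le K (x + w) (y + w) = cone_le K x y.
Proof. by rewrite /cone_le opprD addrACA subrr addr0. Qed.

Lemma cone_le_segment (u y : V) (t : R) : cone_le K u y -> 0 <= t <= 1 ->
  cone_le K u (u + t *: (y - u)) /\ cone_le K (u + t *: (y - u)) y.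
Proof.
move=> Kyu /andP[t0 t1]; rewrite /cone_le addrC addKr opprD addrA.
by rewrite -[X in X - _ *: _]scale1r -scalerBl; split; apply: coneZ; rewrite // subr_ge0.
Qed.

Lemma closed_cone_le_graph : closed [set p : V * V | cone_le K p.1 p.2].
Proof.
have cont : continuous (fun p : V * V => p.2 - p.1).
  by move=> p; apply: cvgB; [exact: cvg_snd | exact: cvg_fst].
exact: (continuous_closedP _).1 cont _ closedK.
Qed.

Lemma closed_cone_le_down (y : V) : closed [set u | cone_le K u y].
Proof.
have cont : continuous (fun u : V => y - u).
  by move=> u; apply: continuousB => //; exact: cst_continuous.
exact: (continuous_closedP _).1 cont _ closedK.
Qed.

Lemma closed_cone_le_up (a : V) : closed [set d | cone_le K a d].
Proof.
have cont : continuous (fun d : V => d - a).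
  by move=> d; apply: (@continuousB _ _ _ id); [exact: cvg_id | exact: cst_continuous].
exact: (continuous_closedP _).1 cont _ closedK.
Qed.

Lemma cone_le_of_interior (e c u : V) (re eta : R) : ball e re `<=` K -> 0 < eta ->
  `|c - u| < eta * re -> cone_le K (c - eta *: e) u.
Proof.
move=> eK eta0 cu; rewrite /cone_le.
have -> : u - (c - eta *: e) = eta *: (e + eta^-1 *: (u - c)).
  by rewrite scalerDr scalerA mulfV ?gt_eqF // scale1r opprB addrCA.
apply: coneZ (ltW eta0); apply: eK; rewrite -ball_normE /= opprD addNKr normrN.
by rewrite normrZ gtr0_norm ?invr_gt0 // distrC ltr_pdivrMl // mulrC.
Qed.

Lemma compact_order_shell (a x : V) (rho : R) :
  compact [set d | `|x - d| = rho /\ cone_le K a d].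
Proof.
apply: bounded_closed_compact.
  exists (`|x| + rho); split; first exact: num_real.
  move=> N /ltW rhoN d [xd _]; apply: le_trans rhoN.
  by rewrite -[d](subKr x) -xd ler_normB.
apply: (@closedI _ [set d | `|x - d| = rho]); last exact: closed_cone_le_up.
have cont : continuous (fun d : V => `|x - d|).
  move=> d; apply: (@continuous_comp _ _ _ (fun d : V => x - d) (fun v : V => `|v|)).
    by apply: continuousB => //; exact: cst_continuous.
  exact: norm_continuous.
exact: (continuous_closedP _).1 cont _ (@closed_eq _ rho).
Qed.

Lemma cone_le_crosses_sphere (a u y x : V) (rho : R) :
  cone_le K a u -> cone_le K u y -> `|x - u| < rho -> rho <= `|x - y| ->
  exists d, [/\ cone_le K a d, cone_le K d y & `|x - d| = rho].
Proof.
move=> au uy xu xy; have [t t01 xd] := segment_crosses_sphere xu xy.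
have [ud dy] := cone_le_segment uy t01.
by exists (u + t *: (y - u)); split => //; exact: cone_le_trans au ud.
Qed.

Lemma pointed_cone_norm_bound : pointed K -> exists2 C : R, 0 < C &
  forall k1 k2, K k1 -> K k2 -> `|k1| <= C * `|k1 + k2|.
Proof.
move=> pointedK; pose S := K `&` [set v | `|v| = 1].
have cS : compact S.
  apply: bounded_closed_compact.
    by exists 1; split => // N N1 v [_ /= ->]; rewrite ltW.
  apply: closedI => //.
  exact: (continuous_closedP _).1 norm_continuous _ (@closed_eq _ 1).
have cNK : closed [set w | K (- w)] by exact: (continuous_closedP _).1 opp_continuous _ closedK.
have [|r r0 Hr] := compact_closed_disjoint_dist cS cNK.
  apply/seteqP; split => // v [[Kv /= v1] /(pointedK v Kv) v0].
  by move: v1; rewrite v0 normr0 => /eqP; rewrite eq_sym oner_eq0.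
exists r^-1; rewrite ?invr_gt0 // => k1 k2 K1 K2.
have [->|k1_neq0] := eqVneq k1 0; first by rewrite normr0 mulr_ge0 // invr_ge0 ltW.
have k1_gt0 : 0 < `|k1| by rewrite normr_gt0.
have Sk1 : S (`|k1|^-1 *: k1).
  split; first by apply: coneZ; rewrite // invr_ge0.
  by rewrite /= normrZ ger0_norm ?invr_ge0 // mulVf // gt_eqF.
have /(Hr _ _ Sk1) : K (- - (`|k1|^-1 *: k2)) by rewrite opprK; apply: coneZ; rewrite // invr_ge0.
rewrite opprK -scalerDr normrZ ger0_norm ?invr_ge0 // mulrC ler_pdivlMr //.
by rewrite [_^-1 * _]mulrC ler_pdivlMr // mulrC.
Qed.

End ClosedConvexCone.

Section DownSetMap.
Variables (R : realType) (n : nat) (K Y : set 'rV[R]_n).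
Hypotheses (convK : convex_cone K) (pointedK : pointed K) (closedK : closed K)
  (intK : interior K !=set0) (openY : open Y).
Local Notation V := 'rV[R]_n.

Lemma cone0_of_interior : K 0.
Proof. by case: intK => x /interior_subset /(cone0 convK closedK). Qed.

Lemma CY_down (y : V) : CY Y (Defs.down K Y y).
Proof.
exists [set u | cone_le K u y]; split; first exact: (closed_cone_le_down closedK).
by apply/seteqP; split => u [].
Qed.

Lemma cone_le_down (x y : V) : Y x ->
  cone_le K x y <-> Defs.down K Y x `<=` Defs.down K Y y.
Proof.
move=> Yx; split => [xy u [Yu ux]|sub].
  by split => //; exact: (cone_le_trans convK ux xy).
have [] // := sub x; split => //; rewrite /cone_le subrr; exact: cone0_of_interior.
Qed.

Lemma down_inj (x y : V) : Y x -> Y y -> Defs.down K Y x = Defs.down K Y y -> x = y.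
Proof.
move=> Yx Yy xy; apply/eqP; rewrite -subr_eq0; apply/eqP/pointedK.
  by apply: (cone_le_down x Yy).2; rewrite xy.
by rewrite opprB; apply: (cone_le_down y Yx).2; rewrite xy.
Qed.

Lemma near_down_meets (O : set V) (y : V) : rel_open Y O ->
  Defs.down K Y y `&` O !=set0 -> \forall z \near y, Defs.down K Y z `&` O !=set0.
Proof.
case=> Q [openQ ->] [u [[Yu uy] [Qu _]]].
have : \forall z \near y, (Q `&` Y) (u + (z - y)).
  have cont : {for y, continuous (fun z : V => u + (z - y))}.
    apply: continuousD; first exact: cst_continuous.
    by apply: continuousB => //; exact: cst_continuous.
  by apply: cont; rewrite subrr addr0; apply: open_nbhs_nbhs; split => //; exact: openI.
apply: filterS => z [Qz Yz]; exists (u + (z - y)); split => //; split => //.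
by rewrite -[X in cone_le _ _ X](subrKC y) cone_leD2r.
Qed.

Lemma near_down_misses (D : set V) (y : V) : compact D -> D `<=` Y ->
  Defs.down K Y y `&` D = set0 -> \forall z \near y, Defs.down K Y z `&` D = set0.
Proof.
move=> cD DY yD0.
have [|r r0 Dr] := compact_closed_disjoint_dist cD (closed_cone_le_down closedK (y := y)).
  apply/seteqP; split => // d [Dd dy].
  by rewrite -yD0; split => //; split => //; exact: DY.
have yz_lt : \forall z \near y, `|y - z| < r.
  by apply/nbhs_ballP; exists r => // z; rewrite -ball_normE.
apply: filterS yz_lt => z yz; apply/seteqP; split => // d [[_ dz] Dd].
have : cone_le K (d + (y - z)) (z + (y - z)) by rewrite cone_leD2r.
rewrite subrKC => /(Dr _ _ Dd); rewrite opprD addrA subrr add0r normrN.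
by rewrite leNgt yz.
Qed.

Lemma fell_subbasic_near (S : set (set V)) (y : V) : fell_subbasic Y S ->
  S (Defs.down K Y y) -> \forall z \near y, S (Defs.down K Y z).
Proof.
case=> [[Orel [relO ->]] [_ yO]|[D [cD [DY ->]]] [_ yD]].
- by apply: filterS (near_down_meets relO yO) => z; split => //; exact: CY_down.
- by apply: filterS (near_down_misses cD DY yD) => z; split => //; exact: CY_down.
Qed.

Lemma rel_open_down_preimage (W : set (set V)) : rel_fell_open K Y W ->
  rel_open Y [set y | Y y /\ W (Defs.down K Y y)].
Proof.
case=> U [[_ Ufell] ->].
exists [set y | Y y /\ (U `&` Cdown K Y) (Defs.down K Y y)]; split; last first.
  by apply/seteqP; split => [y [Yy Wy]|y [[Yy Wy] _]].
rewrite openE => y [Yy [Uy _]]; have [k [S [Sfell [Sy SU]]]] := Ufell _ Uy.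
have Snear : \forall z \near y, forall i, S i (Defs.down K Y z).
  apply: (@filter_forall _ _ (fun i z => S i (Defs.down K Y z)) (nbhs y) _) => i.
  exact: fell_subbasic_near.
have Ynear : nbhs y Y by apply: open_nbhs_nbhs.
apply: filterS (filterI Ynear Snear) => z [Yz Sz]; split => //; split; last by exists z.
by apply: SU; split => //; exact: CY_down.
Qed.

Lemma down_fell_nbhs_ball (y0 : V) (eps : R) : 0 < eps -> ball y0 eps `<=` Y ->
  exists Q D, [/\ open Q /\ compact D, D `<=` Y,
    Defs.down K Y y0 `&` (Q `&` Y) !=set0, Defs.down K Y y0 `&` D = set0 &
    forall y, Y y -> Defs.down K Y y `&` (Q `&` Y) !=set0 ->
      Defs.down K Y y `&` D = set0 -> ball y0 eps y].
Proof.
move=> eps0 epsY.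
have near_y0 z : `|y0 - z| < eps -> Y z by move=> y0z; apply: epsY; rewrite -ball_normE.
pose rho := eps / 2.
have rho0 : 0 < rho by rewrite divr_gt0.
have rho_eps : rho < eps by rewrite ltr_pdivrMr // ltr_pMr // ltr1n.
have [e /nbhs_ballP[re /= re0 eK]] := intK.
have Ke : K e by apply: eK; exact: ballxx.
have [C C0 normK] := pointed_cone_norm_bound convK closedK pointedK.
(* [eta * M < rho] controls at once |y0 - c|, the ball around c and the interval [a, y0]. *)
pose M := C * `|e| *+ 2 + `|e| + re.
have eM : `|e| + re <= M by rewrite /M -addrA lerDr mulrn_wge0 // mulr_ge0 // ltW.
have CeM : C * `|e| *+ 2 <= M by rewrite /M -addrA lerDl addr_ge0 // ltW.
have [eta eta0 etaM] : exists2 eta, 0 < eta & eta * M < rho.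
  by apply: exists_pos_mulr_lt rho0; rewrite (le_trans _ eM) // addr_ge0 // ltW.
pose c := y0 - eta *: e; pose a := c - eta *: e.
pose D := [set d | `|y0 - d| = rho /\ cone_le K a d].
have y0c : y0 - c = eta *: e by rewrite opprB addrC subrK.
have y0a : y0 - a = (eta + eta) *: e by rewrite opprB addrCA y0c scalerDl.
have DY : D `<=` Y by move=> d [y0d _]; apply: near_y0; rewrite y0d.
exists (ball c (eta * re)), D; split => //.
- by split; [exact: ball_open | exact: (compact_order_shell closedK)].
- have Yc : Y c.
    apply: near_y0; apply: lt_trans rho_eps; apply: le_lt_trans etaM.
    rewrite y0c normrZ gtr0_norm // ler_pM2l //; apply: le_trans eM.
    by rewrite lerDl ltW.
  exists c; split; split => //; last exact: ballxx (mulr_gt0 eta0 re0).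
  by rewrite /cone_le y0c; exact: (coneZ convK closedK Ke (ltW eta0)).
- apply/seteqP; split => // d [[_ dy0] [y0d ad]].
  have := normK _ _ dy0 ad; rewrite addrA subrK y0a y0d normrZ gtr0_norm ?addr_gt0 //.
  have CM : C * ((eta + eta) * `|e|) <= eta * M.
    have -> : C * ((eta + eta) * `|e|) = eta * (C * `|e| *+ 2) by rewrite mulr2n; ring.
    by rewrite ler_pM2l.
  by move=> /le_trans/(_ CM)/le_lt_trans/(_ etaM); rewrite ltxx.
- move=> y Yy [u [[Yu uy] [cu _]]] yD0.
  rewrite -ball_normE /= in cu.
  have au : cone_le K a u by exact: (cone_le_of_interior convK closedK eK eta0).
  have y0u : `|y0 - u| < rho.
    have -> : y0 - u = (y0 - c) + (c - u) by rewrite addrA subrK.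
    rewrite y0c; apply: le_lt_trans (ler_normD _ _) _; apply: le_lt_trans etaM.
    apply: le_trans (_ : _ <= eta * (`|e| + re)) _; last by rewrite ler_pM2l.
    by rewrite mulrDr normrZ gtr0_norm // lerD2l ltW.
  rewrite -ball_normE /= ltNge; apply/negP => far.
  have [d [ad dy y0d]] :=
    cone_le_crosses_sphere convK closedK au uy y0u (le_trans (ltW rho_eps) far).
  suff : (Defs.down K Y y `&` D) d by rewrite yD0.
  by split; [split; first exact: DY|].
Qed.

Lemma rel_fell_open_down_image (O : set V) : rel_open Y O ->
  rel_fell_open K Y (Defs.down K Y @` O).
Proof.
case=> Q0 [openQ0 ->].
pose U := [set A | CY Y A /\ exists k (S : 'I_k -> set (set V)),
  [/\ forall i, fell_subbasic Y (S i), forall i, S i A &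
    [set B | CY Y B /\ forall i, S i B] `&` Cdown K Y `<=` Defs.down K Y @` (Q0 `&` Y)]].
exists U; split.
  split=> [A []//|A [CA [k [S [Sfell SA SQ0]]]]].
  exists k, S; split=> //; split=> // B [CB SB].
  by split=> //; exists k, S.
apply/seteqP; split=> [_ [y [Q0y Yy] <-]|A [[CA [k [S [_ SA SQ0]]]] [y [Yy Ay]]]]; last first.
  by apply: SQ0; split; [split | exists y].
split; last by exists y.
split; first exact: CY_down.
have /nbhs_ballP[eps /= eps0 epsQ0Y] : nbhs y (Q0 `&` Y).
  by apply: open_nbhs_nbhs; split => //; exact: openI.
have [|Q [D [[openQ cD] DY yQ yD in_ball]]] := down_fell_nbhs_ball (y0 := y) eps0.
  by move=> z /epsQ0Y [].
pose S (i : 'I_2) := if val i == 0 then [set A | CY Y A /\ A `&` (Q `&` Y) !=set0]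
                     else [set A | CY Y A /\ A `&` D = set0].
exists 2, S; split.
- case=> [[|[|m]] i2] //=; first by left; exists (Q `&` Y); split=> //; exists Q.
  by right; exists D.
- by case=> [[|[|m]] i2] //=; split=> //; exact: CY_down.
- move=> B [[_ SB] [z [Yz Bz]]]; rewrite Bz in SB.
  have [[_ zQ] [_ zD]] := (SB (@Ordinal 2 0 isT), SB (@Ordinal 2 1 isT)).
  by exists z; [case: (epsQ0Y z (in_ball z Yz zQ zD)) | rewrite Bz].
Qed.

Lemma cone_order_is_POTS : is_POTS K Y.
Proof.
split=> [x _|]; first by rewrite /cone_le subrr; exact: cone0_of_interior.
split=> [x y _ _ xy yx|].
  by apply/eqP; rewrite -subr_eq0; apply/eqP/pointedK; rewrite ?opprB.
split=> [x y z _ _ _|]; first exact: (cone_le_trans convK).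
exists [set p | cone_le K p.1 p.2]; split; first exact: (closed_cone_le_graph closedK).
by apply/seteqP; split=> [[x y] [? [? ?]]|[x y] [? [? ?]]].
Qed.

Lemma down_topo_order_embeds : topo_order_embeds K Y.
Proof.
split=> [y _|]; first exact: CY_down.
split=> [x y Yx _|]; first exact: cone_le_down.
split=> [x y Yx Yy|]; first exact: down_inj.
split; [exact: rel_open_down_preimage | exact: rel_fell_open_down_image].
Qed.

End DownSetMap.

Theorem theorem3p4 (R : realType) (n : nat) (K Y : set 'rV[R]_n) :
  (1 < n)%N ->
  convex_cone K -> pointed K -> closed K -> interior K !=set0 ->
  open Y -> Y !=set0 ->
  is_POTS K Y /\ topo_order_embeds K Y.
Proof.
move=> _ convK pointedK closedK intK openY _.
by split; [exact: cone_order_is_POTS | exact: down_topo_order_embeds].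
Qed.
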